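(* There is a positive existential formula $CO(x)$ in the language $\{0,1,+,\mid,R,T\}$ such that for every prime $p$ and every $n\in\mathbb{Z}$, $\mathfrak{D}_p\models CO(n)$ if and only if $p\nmid n$. That is, the collection of sets $CO_p=\{n\in\mathbb{Z}: p\nmid n\}$ is uniformly positive existentially definable in $\mathcal{D}=\{\mathfrak{D}_p: p \text{ prime}\}$.
   Context: For a prime $p$, $x\mid_p y$ means $y=\pm xp^s$ for some $s\in\mathbb{Z}$. $\mathfrak{D}_p=(\mathbb{Z};0,1,+,\mid,\mid_p,\mathbb{Z}\smallsetminus\{-1,0,1\})$, where $\mid$ is ordinary divisibility, $R$ is interpreted as $\mid_p$, and the unary predicate $T$ as the set $\mathbb{Z}\smallsetminus\{-1,0,1\}$. *)

From HB Require Import structures.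
From mathcomp Require Import all_boot all_order all_algebra.
Set Implicit Arguments. Unset Strict Implicit. Unset Printing Implicit Defensive.
Import Order.TTheory GRing.Theory Num.Theory.
Local Open Scope ring_scope.

(* Terms of the language {0,1,+,|,R,T}; variables are de Bruijn indices. *)
Inductive term : Type :=
  | tVar : nat -> term
  | tZero : term
  | tOne : term
  | tAdd : term -> term -> term.

Inductive pe_formula : Type :=
  | fEq  : term -> term -> pe_formula
  | fDiv : term -> term -> pe_formula
  | fR   : term -> term -> pe_formula
  | fT   : term -> pe_formula
  | fAnd : pe_formula -> pe_formula -> pe_formula
  | fOr  : pe_formula -> pe_formula -> pe_formula
  | fEx  : pe_formula -> pe_formula.

Definition divp (p : nat) (x y : int) : Prop :=
  exists s : int,
    (y%:~R : rat) = x%:~R * (p%:~R) ^ s \/ (y%:~R : rat) = - (x%:~R * (p%:~R) ^ s).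

Definition Tpred (x : int) : Prop := x != -1 /\ x != 0 /\ x != 1.

Fixpoint eval_term (e : nat -> int) (t : term) : int :=
  match t with
  | tVar i => e i
  | tZero => 0
  | tOne => 1
  | tAdd a b => eval_term e a + eval_term e b
  end.

Definition scons (z : int) (e : nat -> int) : nat -> int :=
  fun i => match i with O => z | S j => e j end.

Fixpoint sat (p : nat) (e : nat -> int) (f : pe_formula) : Prop :=
  match f with
  | fEq a b => eval_term e a = eval_term e b
  | fDiv a b => (eval_term e a %| eval_term e b)%Z
  | fR a b => divp p (eval_term e a) (eval_term e b)
  | fT a => Tpred (eval_term e a)
  | fAnd g h => sat p e g /\ sat p e h
  | fOr g h => sat p e g \/ sat p e h
  | fEx g => exists z : int, sat p (scons z e) g
  end.

From Pilot Require Import Defs.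
From mathcomp Require Import all_boot all_order all_algebra.
From mathcomp Require Import cyclic zify.
Set Implicit Arguments. Unset Strict Implicit. Unset Printing Implicit Defensive.
Import Order.TTheory GRing.Theory Num.Theory.
Local Open Scope ring_scope.

(* If p does not divide x then x divides p^t - 1 with t = phi(|x|) > 0 (Euler),
   and y = p^t is a witness to 1 |_p y with y in T.  Conversely, 1 |_p y forces
   y = +-p^s, and y in T forces s > 0, so p divides y; then x | y - 1 rules out
   p | x, since p would divide y - (y - 1) = 1. *)

(* CO(x) := exists y z, 1 |_p y /\ T y /\ z + 1 = y /\ x | z;
   under the two binders x, y, z are the indices 2, 1, 0. *)
Definition CO : pe_formula :=
  fEx (fEx (fAnd (fR tOne (tVar 1)) (fAnd (fT (tVar 1))
    (fAnd (fEq (tAdd (tVar 0) tOne) (tVar 1)) (fDiv (tVar 2) (tVar 0)))))).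

Lemma sat_CO p e :
  sat p e CO <-> exists y, [/\ Defs.divp p 1 y, Tpred y & (e 0%N %| y - 1)%Z].
Proof.
split=> [[y [z [y1 [Ty [zy xz]]]]] | [y [y1 Ty xy]]].
- by exists y; split=> //; rewrite /= in zy; rewrite -zy addrK.
- by exists y, (y - 1); do !split=> //=; rewrite subrK.
Qed.

Section PrimeBase.

Variable p : nat.
Hypothesis p_prime : prime p.

Lemma prime_ndvdz1 : ~ (p%:Z %| 1)%Z.
Proof. by rewrite dvdz1 /= => /eqP p1; move: p_prime; rewrite p1. Qed.

Lemma intr_eq_exprz_prime (w s : int) :
  (w%:~R : rat) = p%:~R ^ s -> w = 1 \/ (p%:Z %| w)%Z.
Proof.
have p_neq0 : (p%:~R : rat) != 0 by rewrite intr_eq0 eqz_nat -lt0n prime_gt0.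
case: s => k; rewrite ?NegzE -?exprnN -?exprnP => wE.
- have -> : w = p%:Z ^+ k by apply: (@intr_inj rat); rewrite wE rmorphXn.
  by case: k {wE} => [|k]; [left | right; rewrite exprS dvdz_mulr].
- have wpk : w * p%:Z ^+ k.+1 = 1.
    apply: (@intr_inj rat).
    by rewrite rmorphM rmorphXn /= wE mulVf ?expf_neq0 // rmorph1.
  have : (p%:Z %| w * p%:Z ^+ k.+1)%Z by rewrite exprS mulrCA dvdz_mulr.
  by rewrite wpk => /prime_ndvdz1.
Qed.

Lemma divp1_Tpred_dvdz y : Defs.divp p 1 y -> Tpred y -> (p%:Z %| y)%Z.
Proof.
move=> [s]; rewrite mul1r => yE [y_neqN1 [_ y_neq1]].
have [w [wy wE]] : exists w, (w = y \/ w = - y) /\ (w%:~R : rat) = p%:~R ^ s.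
  case: yE => yE; first by exists y; split; [left |].
  by exists (- y); split; [right | rewrite mulrNz yE opprK].
case: (intr_eq_exprz_prime wE) => [w1 | p_dvd_w]; case: wy => wy.
- by rewrite -wy w1 eqxx in y_neq1.
- by rewrite -[y]opprK -wy w1 eqxx in y_neqN1.
- by rewrite -wy.
- by rewrite -[y]opprK -wy rpredN.
Qed.

Lemma divp1_expn k : Defs.divp p 1 (p ^ k)%:Z.
Proof. by exists k; left; rewrite mul1r -exprnP -!pmulrn natrX. Qed.

Lemma Tpred_expn k : (0 < k)%N -> Tpred (p ^ k)%:Z.
Proof.
move=> k_gt0; have p_gt1 := prime_gt1 p_prime.
have : (1 < p ^ k)%N by rewrite -(expn0 p) ltn_exp2l.
by rewrite /Tpred; lia.
Qed.

Lemma dvdz_expn_totient_sub1 (x : int) :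
  ~ (p%:Z %| x)%Z -> (x %| (p ^ totient `|x|)%:Z - 1)%Z.
Proof.
move=> p_ndvd_x; have p_gt1 := prime_gt1 p_prime.
have cop : coprime p `|x| by rewrite prime_coprime //; apply/negP.
have pt_gt0 : (0 < p ^ totient `|x|)%N by rewrite expn_gt0 ltnW.
have : (`|x| %| p ^ totient `|x| - 1)%N.
  by rewrite -eqn_mod_dvd // Euler_exp_totient.
by rewrite (subzn pt_gt0) dvdzE absz_nat.
Qed.

End PrimeBase.

Theorem lemma4p10 :
  exists CO : pe_formula,
    forall (p : nat), prime p ->
    forall (e : nat -> int),
      sat p e CO <-> ~ (p%:Z %| e 0%N)%Z.
Proof.
exists CO => p p_prime e; rewrite sat_CO; split.
- move=> [y [y1 Ty x_dvd]] p_dvd_x; case: (prime_ndvdz1 p_prime).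
  have p_dvd_y := divp1_Tpred_dvdz p_prime y1 Ty.
  have p_dvd_y1 := dvdz_trans p_dvd_x x_dvd.
  by have := rpredB p_dvd_y p_dvd_y1; rewrite opprB addrC subrK.
- move=> p_ndvd_x; exists (p ^ totient `|e 0%N|)%:Z; split.
  + exact: divp1_expn.
  + apply: Tpred_expn => //; rewrite totient_gt0 absz_gt0.
    by apply/eqP=> x0; apply: p_ndvd_x; rewrite x0 dvdz0.
  + exact: dvdz_expn_totient_sub1.
Qed.
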